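(* Let $n>0$ and let $\mathcal{P}=(P_1,\dots,P_n)$ be a family of lattice polytopes in $\mathbb{R}^d$ with $0\in P_i$ for all $i$. Then \[ (-1)^n\,\mathrm{CM}E(P_1,\dots,P_n)\;=\;\sum_{\mu\in P_{[n]}\cap\mathbb{Z}^d}\tilde\chi\big(\Delta(\mathcal{P};\mu)\big), \] where $\tilde\chi$ denotes the reduced Euler characteristic.
   Context: A lattice polytope is a convex polytope in $\mathbb{R}^d$ all of whose vertices lie in $\mathbb{Z}^d$. For $S\subseteq[n]=\{1,\dots,n\}$ write $P_S:=\sum_{i\in S}P_i=\{\sum_{i\in S}p_i : p_i\in P_i\}$ (Minkowski sum), with $P_\emptyset:=\{0\}$. For a set $S\subset\mathbb{R}^d$, the discrete volume is $E(S):=|S\cap\mathbb{Z}^d|$. The discrete mixed volume is $\mathrm{CM}E(P_1,\dots,P_n):=\sum_{I\subseteq[n]}(-1)^{n-|I|}E(P_I)$. For $\mu\in\mathbb{R}^d$, the Minkowski complex $\Delta(\mathcal{P};\mu)$ is the simplicial complex on vertex set $[n]$ consisting of all $\sigma\subseteq[n]$ with $\mu\notin P_\sigma$. The reduced Euler characteristic of a simplicial complex $\Delta$ (a family of subsets closed under taking subsets, possibly containing the empty set) is $\tilde\chi(\Delta)=\sum_{\sigma\in\Delta}(-1)^{|\sigma|-1}$. *)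

From HB Require Import structures.
From mathcomp Require Import all_boot all_order all_algebra.
From mathcomp Require Import finmap.
From mathcomp Require Import boolp classical_sets cardinality reals.
Set Implicit Arguments. Unset Strict Implicit. Unset Printing Implicit Defensive.
Import Order.TTheory GRing.Theory Num.Theory.
Local Open Scope classical_set_scope.
Local Open Scope ring_scope.

Definition intvec (R : realType) (d : nat) (z : 'rV[int]_d) : 'rV[R]_d :=
  map_mx (fun k : int => k%:~R) z.

(* convex hull of a finite list V of integer points: a lattice polytope
   (every lattice polytope is the convex hull of its integer vertices). *)
Definition lattice_polytope (R : realType) (d : nat) (V : seq 'rV[int]_d)
  : set 'rV[R]_d :=
  [set x | exists w : 'I_(size V) -> R,
     (forall i, 0 <= w i) /\ \sum_i w i = 1 /\
     x = \sum_i w i *: intvec R (nth 0 V i)].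

Definition minkowski (R : realType) (d n : nat) (P : 'I_n -> set 'rV[R]_d)
  (S : {set 'I_n}) : set 'rV[R]_d :=
  [set x | exists p : 'I_n -> 'rV[R]_d,
     (forall i, i \in S -> P i (p i)) /\ x = \sum_(i in S) p i].

Definition lattice_points (R : realType) (d : nat) (A : set 'rV[R]_d)
  : {fset 'rV[int]_d} :=
  fset_set [set z : 'rV[int]_d | A (intvec R z)].

Definition discrete_volume (R : realType) (d : nat) (A : set 'rV[R]_d) : nat :=
  #|` lattice_points A |%fset.

Definition discrete_mixed_volume (R : realType) (d n : nat)
  (P : 'I_n -> set 'rV[R]_d) : int :=
  \sum_(I : {set 'I_n}) (-1) ^+ (n - #|I|)%N * (discrete_volume (minkowski P I))%:Z.

Definition minkowski_complex (R : realType) (d n : nat)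
  (P : 'I_n -> set 'rV[R]_d) (mu : 'rV[R]_d) : pred {set 'I_n} :=
  fun sigma => `[< ~ minkowski P sigma mu >].

(* reduced Euler characteristic: sum_{sigma in Delta} (-1)^{|sigma|-1};
   (-1)^{|sigma|-1} is written (-1)^{|sigma|+1} to stay in nat exponents. *)
Definition reduced_euler_char (n : nat) (Delta : pred {set 'I_n}) : int :=
  \sum_(sigma : {set 'I_n} | Delta sigma) (-1) ^+ (#|sigma|.+1).

From HB Require Import structures.
From mathcomp Require Import all_boot all_order all_algebra.
From mathcomp Require Import finmap.
From mathcomp Require Import boolp classical_sets cardinality reals.
Import Order.TTheory GRing.Theory Num.Theory.
Local Open Scope ring_scope.

(* Exchanging the order of summation, E(P_I) = sum over the lattice points mu
   of P_[n] of [mu in P_I]: since every P_i contains 0, P_I is contained in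
   P_[n], so no lattice point is lost.  At a fixed mu the signed count
   sum_I (-1)^|I| [mu in P_I] equals, because sum_I (-1)^|I| = 0 for n > 0,
   the sum of (-1)^(|I|-1) over the sets I with mu not in P_I, i.e. the
   reduced Euler characteristic of the Minkowski complex at mu. *)

Lemma sum_sign_card_set_eq0 {T : finType} : (0 < #|T|)%N ->
  \sum_(I : {set T}) (-1) ^+ #|I| = 0%R :> int.
Proof.
case/card_gt0P=> x _.
pose toggle (I : {set T}) := if x \in I then I :\ x else x |: I.
have toggleK : involutive toggle.
  move=> I; rewrite /toggle; case: (boolP (x \in I)) => xI.
    by rewrite setD11 finset.setD1K.
  by rewrite setU11 setU1K.
have sign_toggle I : (-1) ^+ #|toggle I| = - (-1) ^+ #|I| :> int.
  rewrite /toggle; case: (boolP (x \in I)) => xI.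
    by rewrite [in RHS](cardsD1 x) xI exprS mulN1r opprK.
  by rewrite cardsU1 xI exprS mulN1r.
set S := \sum_I _; have : S = - S.
  rewrite {1}/S (reindex_inj (can_inj toggleK)) /= -sumrN.
  by apply: eq_bigr => I _; rewrite sign_toggle.
by move/eqP; rewrite -subr_eq0 opprK -mulr2n mulrn_eq0 => /eqP.
Qed.

Lemma sum_sign_card_indicator (T : finType) (b : pred {set T}) :
  (0 < #|T|)%N ->
  \sum_(I : {set T}) (-1) ^+ #|I| * (b I)%:Z =
  \sum_(I : {set T} | ~~ b I) (-1) ^+ #|I|.+1.
Proof.
move=> T_gt0.
transitivity (\sum_(I : {set T}) ((-1) ^+ #|I| * (b I)%:Z - (-1) ^+ #|I|)).
  by rewrite sumrB sum_sign_card_set_eq0 // subr0.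
rewrite [RHS]big_mkcond; apply: eq_bigr => I _.
by case: (b I); rewrite /= ?mulr1 ?subrr // mulr0 sub0r exprS mulN1r.
Qed.

Lemma mulr_sign_subn (R : pzRingType) (n k : nat) : (k <= n)%N ->
  (-1) ^+ n * (-1) ^+ (n - k) = (-1) ^+ k :> R.
Proof.
move=> kn; rewrite -exprD -signr_odd -[RHS]signr_odd oddD oddB //.
by rewrite addbA addbb.
Qed.

Lemma card_fset_set_sub {T : choiceType} (X : {fset T}) (S : set T) :
  (S `<=` [set` X])%classic ->
  #|` fset_set S|%fset = (\sum_(z <- X) `[< S z >])%N.
Proof.
move=> SX; have finS : finite_set S by apply: finite_subfset SX.
rewrite -big_mkcond /= sum1_count -size_filter.
apply/perm_size/uniq_perm; rewrite ?filter_uniq ?fset_uniq // => z.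
rewrite mem_filter in_fset_set //.
case: (boolP `[< S z >]) => [/asboolP Sz|/asboolPn nSz] /=.
  by rewrite mem_set //; have := SX _ Sz.
by apply/negbTE/negP => /set_mem.
Qed.

Section Minkowski.
Context {R : realType} {d n : nat} {P : 'I_n -> set 'rV[R]_d}.

Lemma minkowski_subset {I J : {set 'I_n}} : (forall i, P i 0) ->
  I \subset J -> (minkowski P I `<=` minkowski P J)%classic.
Proof.
move=> P0 IJ x [p [Pp ->]].
exists (fun i => if i \in I then p i else 0); split.
  by move=> i _; case: ifP => // /Pp.
rewrite [LHS]big_mkcond [RHS]big_mkcond; apply: eq_bigr => i _.
by case: (boolP (i \in I)) => [/(fintype.subsetP IJ) ->|]; case: (i \in J).
Qed.

Lemma minkowski_coord_bound {B : 'I_n -> R} {I : {set 'I_n}} {x k} :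
  (forall i y, P i y -> `|y 0 k| <= B i) ->
  minkowski P I x -> `|x 0 k| <= \sum_(i in I) B i.
Proof.
move=> PB [p [Pp ->]]; rewrite summxE.
by apply: le_trans (ler_norm_sum _ _ _) _; apply: ler_sum => i /Pp /PB.
Qed.

End Minkowski.

Lemma finite_int_box (d B : nat) :
  finite_set [set z : 'rV[int]_d | forall k, `|z 0 k| <= B%:Z].
Proof.
pose shift (g : {ffun 'I_d -> 'I_(B + B).+1}) : 'rV[int]_d :=
  \row_k ((g k : nat)%:Z - B%:Z).
apply: (sub_finite_set (B := shift @` setT)); last exact: finite_image.
move=> z zB.
exists [ffun k => inord (absz (z 0 k + B%:Z))] => //; apply/rowP => k.
rewrite mxE ffunE; have /andP[zk_ge zk_le] : - B%:Z <= z 0 k <= B%:Z.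
  by rewrite -ler_norml zB.
have zkB_ge0 : 0 <= z 0 k + B%:Z by rewrite -lerBlDr sub0r.
rewrite inordK; first by rewrite gez0_abs // addrK.
by rewrite ltnS -lez_nat gez0_abs // PoszD lerD2r.
Qed.

Lemma finite_int_points_bounded {R : realType} {d : nat}
    (A : set 'rV[R]_d) (B : nat) :
  (forall x k, A x -> `|x 0 k| <= B%:R) ->
  finite_set [set z | A (intvec R z)].
Proof.
move=> AB; apply: sub_finite_set (finite_int_box d B) => z Az k.
have := AB _ k Az; rewrite /intvec mxE -intr_norm -natr_absz ler_nat.
by rewrite -abszE lez_nat.
Qed.

Definition vbound {d : nat} (V : seq 'rV[int]_d) : nat :=
  (\max_(v <- V) \max_(k < d) `|v 0%R k|)%N.

Lemma lattice_polytope_coord_bound (R : realType) {d : nat}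
    (V : seq 'rV[int]_d) x k :
  @lattice_polytope R d V x -> `|x 0 k| <= (vbound V)%:R.
Proof.
case=> w [w_ge0 [w_sum1 ->]]; rewrite summxE.
apply: le_trans (ler_norm_sum _ _ _) _.
apply: (@le_trans _ _ (\sum_i w i * (vbound V)%:R)); last first.
  by rewrite -mulr_suml w_sum1 mul1r.
apply: ler_sum => i _; rewrite /intvec !mxE normrM ger0_norm //.
apply: ler_wpM2l => //; rewrite -intr_norm -natr_absz ler_nat.
apply: leq_trans (leq_bigmax_seq _ (mem_nth 0 (ltn_ord i)) isT).
exact: (@leq_bigmax _ (fun k => `|nth 0%R V i 0%R k|%N) k).
Qed.

Lemma finite_int_points_minkowski_polytopes (R : realType) {d n : nat}
    (V : 'I_n -> seq 'rV[int]_d) :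
  finite_set [set z | minkowski (fun i => @lattice_polytope R d (V i))
                        [set: 'I_n] (intvec R z)].
Proof.
apply: (finite_int_points_bounded _ (\sum_i vbound (V i))) => x k Px.
apply: le_trans (minkowski_coord_bound (B := fun i => (vbound (V i))%:R) _ Px) _.
  by move=> i y; apply: lattice_polytope_coord_bound.
by rewrite natr_sum (eq_bigl xpredT _ (@finset.in_setT _)).
Qed.

Section DiscreteVolume.
Context {R : realType} {d n : nat} (P : 'I_n -> set 'rV[R]_d).
Hypothesis P0 : forall i, P i 0.
Hypothesis finP : finite_set [set z | minkowski P [set: 'I_n] (intvec R z)].

Lemma discrete_volume_minkowski_sum (I : {set 'I_n}) :
  (discrete_volume (minkowski P I))%:Z =
  \sum_(z <- lattice_points (minkowski P [set: 'I_n]))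
     (`[< minkowski P I (intvec R z) >] : nat)%:Z.
Proof.
rewrite /discrete_volume {1}/lattice_points.
rewrite (card_fset_set_sub (lattice_points (minkowski P [set: 'I_n]))).
  by rewrite (big_morph Posz PoszD (erefl (Posz 0))).
move=> z /= PIz; rewrite in_fset_set // mem_set //.
exact: (minkowski_subset P0 (finset.subsetT I)) PIz.
Qed.

End DiscreteVolume.

Lemma reduced_euler_char_compl (n : nat) (b : pred {set 'I_n}) : (0 < n)%N ->
  reduced_euler_char (fun I => ~~ b I) =
  (-1) ^+ n * \sum_(I : {set 'I_n}) (-1) ^+ (n - #|I|) * (b I)%:Z.
Proof.
move=> n_gt0; rewrite mulr_sumr /reduced_euler_char -sum_sign_card_indicator.
  apply: eq_bigr => I _; rewrite mulrA mulr_sign_subn //.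
  by rewrite -[X in (_ <= X)%N](card_ord n) max_card.
by rewrite card_ord.
Qed.

Theorem theorem1 (R : realType) (d n : nat) (V : 'I_n -> seq 'rV[int]_d)
  (hn : (0 < n)%N)
  (h0 : forall i, @lattice_polytope R d (V i) 0) :
  let P := fun i => @lattice_polytope R d (V i) in
  (-1) ^+ n * discrete_mixed_volume P =
  \sum_(mu <- lattice_points (minkowski P [set: 'I_n]%SET))
     reduced_euler_char (minkowski_complex P (@intvec R d mu)).
Proof.
move=> P.
have finP := finite_int_points_minkowski_polytopes R V.
rewrite /discrete_mixed_volume.
under eq_bigr do rewrite discrete_volume_minkowski_sum // mulr_sumr.
rewrite exchange_big mulr_sumr; apply: eq_bigr => mu _.
rewrite -reduced_euler_char_compl //; apply: eq_bigl => I.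
by rewrite /minkowski_complex asbool_neg.
Qed.
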